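(* Let $G$ be a graph of order $n$ such that both $G$ and its complement $\bar G$ are connected. Then $b(G)\, b(\bar G)\leq n+4$, and equality holds if and only if $G$ is (isomorphic to) the cycle $C_5$.
   Context: Burning process on a finite graph $G$: initially all vertices are unburned. In each round, every already burned vertex spreads fire to all of its neighbors, which become burned, and at the same time one chooses an unburned vertex (if any remains) and changes its status to burned; burned vertices remain burned. The burning number $b(G)$ is the minimum number of rounds needed to burn all vertices of $G$. $\bar G$ is the complement graph of $G$. *)

(* Simple graphs on a finType T given by an adjacency
   relation e : rel T (assumed symmetric and irreflexive in the theorem). *)
From mathcomp Require Import all_boot.
Set Implicit Arguments. Unset Strict Implicit. Unset Printing Implicit Defensive.

Section Burning.
Variable T : finType.

Definition compl (e : rel T) : rel T := fun x y => (x != y) && ~~ e x y.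

Definition gconnected (e : rel T) : Prop := forall x y : T, connect e x y.

Definition spread (e : rel T) (B : {set T}) : {set T} :=
  [set y | (y \in B) || [exists x in B, e x y]].

Fixpoint burn_run (e : rel T) (B : {set T}) (s : seq T) : option {set T} :=
  match s with
  | [::] => Some B
  | x :: s' => if x \in B then None else burn_run e (spread e B :|: [set x]) s'
  end.

Definition burning_seq (e : rel T) (s : seq T) : bool :=
  burn_run e set0 s == Some [set: T].

Definition burnable (e : rel T) (k : nat) : bool :=
  [exists s : k.-tuple T, burning_seq e s].

(* burning number: the minimum number of rounds needed to burn all
   vertices. (The minimum is taken over k <= #|T|; it is always attained
   there, so the default value #|T| of the big min is never relevant.) *)
Definition burning_number (e : rel T) : nat :=
  \big[minn/#|T|]_(k < #|T|.+1 | burnable e k) k.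

End Burning.

Definition c5 : rel 'I_5 :=
  fun x y => (x.+1 %% 5 == y) || (y.+1 %% 5 == x).

Definition iso_C5 (T : finType) (e : rel T) : Prop :=
  exists f : T -> 'I_5, bijective f /\ forall x y, e x y = c5 (f x) (f y).

(* Call a vertex c of a connected vertex set S removable if S - c is
   connected and contains a neighbour of c. A connected set with at least two
   vertices has two removable vertices, so when |S| >= 4 one can remove in
   turn a removable a1, a removable a2 with a neighbour w2 that stays, and a
   removable a3 <> w2: the rest S' is connected, has |S| - 3 vertices, and S
   lies in the closed neighbourhood of S' plus a1. Burning S' and then
   choosing a1 burns S one round later; hence a connected graph of order n
   has 3 b(G) <= n + 4, and 3 b(G) <= n + 3 once n >= 6, where the one case
   the reduction misses, 8 vertices in 3 rounds, is checked by enumerating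
   the trees on 8 vertices.
   If a vertex has degree at most 1 in G, it dominates all but one vertex in
   the complement, so b(Gc) <= 2. If u and v are at distance at least 3 in G,
   every vertex is within distance 2 of u in the complement, so b(Gc) <= 3,
   while the disjoint closed neighbourhoods of u and v force n >= 6. Otherwise
   G and Gc both have diameter at most 2 and minimum degree at least 2, so
   b(G) b(Gc) <= 9 <= n + 4 with equality only if n = 5 and G is 2-regular,
   that is, G is C5; conversely C5 is self-complementary with burning number 3. *)

From HB Require Import structures.
From mathcomp Require Import all_boot zify.
Set Implicit Arguments. Unset Strict Implicit. Unset Printing Implicit Defensive.

(* Makes [bigD1] available for the [\big[minn/_]] defining [burning_number]. *)
HB.instance Definition _ := SemiGroup.isComLaw.Build nat minn minnA minnC.

Lemma card_le1_sub1 (T : finType) (A : {set T}) (d : T) :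
  #|A| <= 1 -> exists z, A \subset [set z].
Proof.
move=> le1A; case: (set_0Vmem A) => [->|[z zA]]; first by exists d; rewrite sub0set.
by exists z; apply/subsetP => x; rewrite (card_le1P le1A z zA) in_set1.
Qed.

Section Burning.
Variables (T : finType) (e : rel T).
Implicit Types (A B : {set T}) (s : seq T).

Lemma spreadP B y :
  reflect (y \in B \/ exists2 x, x \in B & e x y) (y \in spread e B).
Proof.
rewrite inE; apply: (iffP orP) => [[yB|/exists_inP[x xB exy]]|[yB|[x xB exy]]].
- by left.
- by right; exists x.
- by left.
- by right; apply/exists_inP; exists x.
Qed.

Lemma spread_id B x : x \in B -> x \in spread e B.
Proof. by move=> xB; apply/spreadP; left. Qed.

Lemma spread_edge B x y : x \in B -> e x y -> y \in spread e B.
Proof. by move=> xB exy; apply/spreadP; right; exists x. Qed.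

Lemma sub_spread B : B \subset spread e B.
Proof. by apply/subsetP => x; apply: spread_id. Qed.

Lemma spreadS A B : A \subset B -> spread e A \subset spread e B.
Proof.
move/subsetP=> sAB; apply/subsetP => y /spreadP[/sAB/spread_id //|[x /sAB]].
exact: spread_edge.
Qed.

Lemma in_spread1 x y : (y \in spread e [set x]) = (y == x) || e x y.
Proof.
rewrite inE in_set1; congr orb.
by apply/exists_inP/idP => [[z /set1P-> //]|exy]; exists x; rewrite ?set11.
Qed.

Lemma spread1S B x y : x \in B -> y \in spread e [set x] -> y \in spread e B.
Proof. by move=> xB; apply: (subsetP (spreadS _)); rewrite sub1set. Qed.

Lemma spread0 : spread e set0 = set0.
Proof. by apply/setP => y; rewrite in_set0; apply/negbTE/spreadP => -[|[x]]; rewrite in_set0. Qed.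

(* The burning process in which a chosen vertex may already be burned. *)
Definition burned B s : {set T} := foldl (fun C x => spread e C :|: [set x]) B s.

Lemma burned_rcons B s z : burned B (rcons s z) = spread e (burned B s) :|: [set z].
Proof. by rewrite /burned foldl_rcons. Qed.

Lemma burn_run_of_burned s B B' : B \subset B' -> [set: T] \subset burned B s ->
  exists2 t, size t <= size s & burn_run e B' t = Some [set: T].
Proof.
elim: s B B' => [|x s IHs] B B' sBB' /= burnedT.
  by exists [::] => //=; congr Some; apply/setP/subset_eqP; rewrite subsetT (subset_trans burnedT).
have [B'T|/subsetPn[y _ yB']] := boolP ([set: T] \subset B').
  by exists [::] => //=; congr Some; apply/setP/subset_eqP; rewrite subsetT.
pose c := if x \in B' then y else x.
have cB' : c \notin B' by rewrite /c; case: ifPn.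
have [t le_ts run_t] : exists2 t, size t <= size s &
    burn_run e (spread e B' :|: [set c]) t = Some [set: T].
  apply: IHs burnedT; rewrite subUset (subset_trans (spreadS sBB')) ?subsetUl // sub1set.
  by rewrite in_setU in_set1 /c; case: ifP => [/spread_id ->|_]; rewrite ?eqxx ?orbT.
by exists (c :: t); rewrite //= (negbTE cB').
Qed.

Lemma burn_run_size t B C : burn_run e B t = Some C -> size t <= #|~: B|.
Proof.
elim: t B => //= c t IHt B; case: ifPn => // cB /IHt; move/leq_ltn_trans; apply.
apply: proper_card; rewrite properE !setCS (subset_trans (sub_spread B)) ?subsetUl //=.
by apply/subsetPn; exists c; rewrite ?in_setU ?set11 ?orbT.
Qed.

Lemma burning_number_le s : [set: T] \subset burned set0 s -> burning_number e <= size s.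
Proof.
move=> burnedT; have [t le_ts run_t] := burn_run_of_burned (sub0set set0) burnedT.
have lt_t : size t < #|T|.+1 by rewrite ltnS -cardsT -setC0 (burn_run_size run_t).
have burnable_t : burnable e (size t).
  by apply/existsP; exists (in_tuple t); rewrite /burning_seq run_t.
by rewrite /burning_number (bigD1 (Ordinal lt_t)) //= geq_min le_ts.
Qed.

Lemma burning_number_le_card : burning_number e <= #|T|.
Proof.
rewrite /burning_number; elim/big_ind: _ => // [m n|k _]; first by rewrite geq_min => ->.
by rewrite -ltnS.
Qed.

Lemma burning_number_ge m : m <= #|T| -> (forall k, k < m -> ~~ burnable e k) ->
  m <= burning_number e.
Proof.
move=> le_mT notburn; rewrite /burning_number; elim/big_ind: _ => // [n p|k].
  by rewrite leq_min => ->.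
by apply: contraTT; rewrite -ltnNge => /notburn.
Qed.

Lemma burning_number_le2 x y :
  [set: T] \subset spread e [set x] :|: [set y] -> burning_number e <= 2.
Proof.
by move=> coverT; apply: (@burning_number_le [:: x; y]); rewrite /burned /= spread0 set0U.
Qed.

Lemma burning_number_le3 u :
  [set: T] \subset spread e (spread e [set u]) -> burning_number e <= 3.
Proof.
move=> coverT; apply: (@burning_number_le [:: u; u; u]); apply: subset_trans coverT _.
by rewrite /burned /= spread0 set0U (subset_trans _ (subsetUl _ _)) // spreadS ?subsetUl.
Qed.

Lemma burning_number_ge3 : 3 <= #|T| ->
  (forall x y, ~~ ([set: T] \subset spread e [set x] :|: [set y])) -> 3 <= burning_number e.
Proof.
move=> le3T notcover; apply: burning_number_ge => // k lt_k3.
case/card_gt0P: (ltn_trans (isT : 0 < 2) le3T) => x0 _.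
apply/existsP => -[[s /= /eqP size_s]]; rewrite /burning_seq; move: lt_k3; rewrite -size_s.
case: s {size_s} => [|x [|y [|z s]]] //= _; rewrite ?in_set0 /= ?spread0 ?set0U.
- by move/eqP=> [/setP/(_ x0)]; rewrite !inE.
- by move/eqP=> [xT]; move: (notcover x x); rewrite -xT subsetUr.
- by case: ifP => // _ /eqP[coverT]; move: (notcover x y); rewrite coverT subxx.
Qed.

End Burning.

Section Complement.
Variables (T : finType) (e : rel T).

Lemma compl_sym : symmetric e -> symmetric (compl e).
Proof. by move=> esym x y; rewrite /compl eq_sym esym. Qed.

Lemma compl_irr : irreflexive (compl e).
Proof. by move=> x; rewrite /compl eqxx. Qed.

Lemma complK : irreflexive e -> compl (compl e) =2 e.
Proof.
by move=> eirr x y; rewrite /compl; case: (eqVneq x y) => [->|_]; rewrite ?eirr //= negbK.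
Qed.

End Complement.

Lemma eq_burning_number (T : finType) (e e' : rel T) :
  e =2 e' -> burning_number e = burning_number e'.
Proof.
move=> ee'; have eq_spread B : spread e B = spread e' B.
  by apply/setP => y; rewrite !inE; congr orb; apply: eq_existsb => x; rewrite ee'.
have eq_run B s : burn_run e B s = burn_run e' B s.
  by elim: s B => //= x s IHs B; rewrite eq_spread IHs.
by apply: eq_bigl => k; apply: eq_existsb => s; rewrite /burning_seq eq_run.
Qed.

(* Short-circuiting [has] and [all]: [vm_compute] evaluates the arguments of
   [||] and [&&] eagerly, which makes the search below much slower. *)
Fixpoint hasb (A : Type) (p : A -> bool) (s : seq A) : bool :=
  if s is x :: s' then (if p x then true else hasb p s') else false.

Fixpoint allb (A : Type) (p : A -> bool) (s : seq A) : bool :=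
  if s is x :: s' then (if p x then allb p s' else false) else true.

Lemma hasbE (A : Type) (p : A -> bool) s : hasb p s = has p s.
Proof. by elim: s => //= x s ->; case: (p x). Qed.

Lemma allbE (A : Type) (p : A -> bool) s : allb p s = all p s.
Proof. by elim: s => //= x s ->; case: (p x). Qed.

(* A tree on the vertices 0, ..., 7 in which vertex i < 7 has parent nth 0 l i > i. *)
Definition tree_adj (l : seq nat) i j :=
  ((i < 7) && (nth 0 l i == j)) || ((j < 7) && (nth 0 l j == i)).

Definition tree_ball1 l a i := (a == i) || tree_adj l a i.

Definition tree_ball2 l a i :=
  hasb (fun j => if tree_ball1 l a j then tree_ball1 l j i else false) (iota 0 8).

Definition tree_burnable3 l :=
  hasb (fun a => hasb (fun b => hasb (fun c => allb (fun i =>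
    if tree_ball2 l a i then true else if tree_ball1 l b i then true else i == c)
  (iota 0 8)) (iota 0 8)) (iota 0 8)) (iota 0 8).

Fixpoint parent_lists (m i : nat) : seq (seq nat) :=
  if m is m'.+1 then [seq j :: t | j <- iota i.+1 (7 - i), t <- parent_lists m' i.+1]
  else [:: [::]].

Lemma mem_parent_lists m i l : size l = m ->
  (forall k, k < m -> i + k < nth 0 l k <= 7) -> l \in parent_lists m i.
Proof.
elim: m i l => [|m IHm] i [|j l] //= [size_l] bounds.
apply: (allpairs_f (fun j t => j :: t)).
  by rewrite mem_iota; have /= := bounds 0 isT; lia.
by apply: IHm => // k lt_km; have /= := bounds k.+1 lt_km; rewrite addnS.
Qed.

Lemma parent_lists_burnable3 : allb tree_burnable3 (parent_lists 7 0).
Proof. by vm_compute. Qed.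

Lemma tree_burnable3P l : tree_burnable3 l -> exists a b c,
  forall i, i < 8 -> [\/ exists2 j, tree_ball1 l a j & tree_ball1 l j i, tree_ball1 l b i | i = c].
Proof.
rewrite /tree_burnable3 !hasbE => /hasP[a _]; rewrite hasbE => /hasP[b _].
rewrite hasbE => /hasP[c _]; rewrite allbE => /allP cover; exists a, b, c => i lt_i8.
move: (cover i); rewrite mem_iota /= => /(_ lt_i8); rewrite /tree_ball2 hasbE.
case: hasP => [[j _]|_]; first by case: ifP => // aj ji _; apply: Or31; exists j.
by case: ifP => [? _|_ /eqP]; [apply: Or32 | apply: Or33].
Qed.

Section ConnectedSets.
Variables (T : finType) (e : rel T).
Hypothesis esym : symmetric e.
Implicit Types (S : {set T}).

Inductive conn_set : {set T} -> Prop :=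
| conn_set1 x : conn_set [set x]
| conn_setU1 x S : conn_set S -> x \notin S -> (exists2 y, y \in S & e x y) ->
    conn_set (x |: S).

Definition removable S c :=
  [/\ c \in S, conn_set (S :\ c) & exists2 y, y \in S :\ c & e y c].

Lemma conn_set_card_gt0 S : conn_set S -> 0 < #|S|.
Proof. by case=> [x|x S' _ xS' _]; rewrite ?cards1 ?cardsU1 ?xS'. Qed.

Lemma setU1D1 x c S : x != c -> (x |: S) :\ c = x |: (S :\ c).
Proof. by move=> xc; apply/setP => z; rewrite !inE; have [->|] := eqVneq z x; rewrite ?xc. Qed.

Lemma removableU1 x S c y :
  removable S c -> x \notin S -> y \in S -> c != y -> e x y -> removable (x |: S) c.
Proof.
case=> cS connSc [w wSc ewc] xS yS cy exy.
have xc : x != c by apply: contraNneq xS => ->.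
split; first by rewrite setU1r.
  by rewrite setU1D1 //; apply: conn_setU1 => //; [rewrite !inE negb_and xS orbT |
    exists y; rewrite // in_setD1 eq_sym cy].
by exists w; rewrite // setU1D1 // setU1r.
Qed.

Lemma conn_set_removable S y : conn_set S -> 1 < #|S| -> exists2 c, c != y & removable S c.
Proof.
move=> connS; elim: connS y => [x|x S0 connS0 IH xS0 [y0 y0S0 exy0]] y; first by rewrite cards1.
move=> _; have [<-{y}|xy] := eqVneq x y; last first.
  by exists x => //; split; rewrite ?setU11 ?setU1K //; exists y0; rewrite ?setU1K // esym.
have [lt1S0|le1S0] := ltnP 1 #|S0|.
  have [c cy0 remc] := IH y0 lt1S0; exists c; last exact: removableU1 remc xS0 y0S0 cy0 exy0.
  by apply: contraNneq xS0 => <-; case: remc.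
have S0E : S0 = [set y0] by apply/eqP; rewrite eq_sym eqEcard sub1set y0S0 cards1.
have xy0 : x != y0 by apply: contraNneq xS0 => ->.
exists y0; first by rewrite eq_sym.
rewrite S0E; split; first by rewrite !inE eqxx orbT.
  by rewrite setU1D1 // setDv setU0; apply: conn_set1.
by exists x; rewrite // setU1D1 // setDv setU0 set11.
Qed.

Lemma conn_set_shrink3 S : conn_set S -> 3 < #|S| ->
  exists S' z, [/\ conn_set S', #|S'| + 3 = #|S| & S \subset spread e S' :|: [set z]].
Proof.
move=> connS lt3S; case/card_gt0P: (conn_set_card_gt0 connS) => d _.
have [a1 _ [a1S conn1 _]] := conn_set_removable d connS ltac:(lia).
have card1 := cardsD1 a1 S; rewrite a1S in card1.
have [a2 _ [a2S1 conn2 [w2 w2S2 ew2a2]]] := conn_set_removable d conn1 ltac:(lia).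
have card2 := cardsD1 a2 (S :\ a1); rewrite a2S1 in card2.
have [a3 a3w2 [a3S2 conn3 [w3 w3S3 ew3a3]]] := conn_set_removable w2 conn2 ltac:(lia).
have card3 := cardsD1 a3 (S :\ a1 :\ a2); rewrite a3S2 in card3.
exists (S :\ a1 :\ a2 :\ a3), a1; split => //; first by lia.
apply/subsetP => x xS; rewrite in_setU in_set1.
have [->|xa1] := eqVneq x a1; first by rewrite orbT.
have [->|xa2] := eqVneq x a2; first by rewrite (spread_edge _ ew2a2) // in_setD1 eq_sym a3w2.
have [->|xa3] := eqVneq x a3; first by rewrite (spread_edge _ ew3a3).
by rewrite spread_id // !in_setD1 xa1 xa2 xa3.
Qed.

Lemma conn_set_shrink S : conn_set S -> exists S' z,
  [/\ conn_set S', #|S'| + 3 <= #|S| \/ #|S'| = 1 & S \subset spread e S' :|: [set z]].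
Proof.
move=> connS; have [lt3S|le3S] := ltnP 3 #|S|.
  have [S' [z [connS' cardS' coverS]]] := conn_set_shrink3 connS lt3S.
  by exists S', z; split => //; left; rewrite cardS'.
have S_gt0 := conn_set_card_gt0 connS; case/card_gt0P: (S_gt0) => d dS.
have [lt1S|le1S] := ltnP 1 #|S|; last first.
  exists S, d; split => //; last exact: subset_trans (sub_spread e S) (subsetUl _ _).
  by right; apply/eqP; rewrite eqn_leq le1S S_gt0.
have [a _ [aS _ [y ySa eya]]] := conn_set_removable d connS lt1S.
have := cardsD1 a S; have := cardsD1 y (S :\ a); rewrite aS ySa => cardSay cardSa.
have [z restz] := @card_le1_sub1 _ (S :\ a :\ y) d ltac:(lia).
exists [set a], z; split; [exact: conn_set1 | by right; rewrite cards1 |].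
apply/subsetP => x xS; rewrite in_setU.
have [->|xa] := eqVneq x a; first by rewrite spread_id ?set11.
have [->|xy] := eqVneq x y; first by rewrite (@spread_edge _ _ _ a) ?set11 // esym.
by rewrite (subsetP restz) ?orbT // !in_setD1 xa xy.
Qed.

Definition coverable S k := exists2 s, size s = k & S \subset burned e set0 s.

Lemma coverable_rcons S S' z k :
  coverable S' k -> S \subset spread e S' :|: [set z] -> coverable S k.+1.
Proof.
case=> s size_s coverS' coverS; exists (rcons s z); first by rewrite size_rcons size_s.
by rewrite burned_rcons (subset_trans coverS) // setSU // spreadS.
Qed.

Lemma conn_set_coverable S k : conn_set S -> #|S| + 2 <= 3 * k -> coverable S k.
Proof.
elim: k S => [|[|k] IHk] S connS leSk; first by have := conn_set_card_gt0 connS; lia.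
  have /cards1P[x ->] : #|S| == 1 by have := conn_set_card_gt0 connS; lia.
  by exists [:: x]; rewrite //= /burned /= spread0 set0U.
have [S' [z [connS' cardS' coverS]]] := conn_set_shrink connS.
by apply: coverable_rcons (IHk _ connS' _) coverS; lia.
Qed.

Lemma conn_set_enum S d : conn_set S -> exists s p, [/\ uniq s, S = [set x in s] &
  forall i, i.+1 < size s -> i < p i < size s /\ e (nth d s i) (nth d s (p i))].
Proof.
elim=> [x|x S0 _ [s [p [uniq_s S0E parent_p]]] xS0 [y yS0 exy]].
  by exists [:: x], id; split => //; apply/setP => z; rewrite !inE.
rewrite S0E !inE in xS0 yS0.
exists (x :: s), (fun i => if i is i'.+1 then (p i').+1 else (index y s).+1); split.
- by rewrite /= xS0.
- by apply/setP => z; rewrite S0E !inE.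
- by case=> [|i] /=; rewrite !ltnS ?index_mem ?nth_index //; apply: parent_p.
Qed.

Lemma conn_set_coverable8 S : conn_set S -> #|S| = 8 -> coverable S 3.
Proof.
move=> connS cardS; case/card_gt0P: (conn_set_card_gt0 connS) => d _.
have [s [p [uniq_s SE parent_p]]] := conn_set_enum d connS.
have size_s : size s = 8 by rewrite -cardS SE cardsE (card_uniqP uniq_s).
pose v i := nth d s i; pose l := mkseq p 7.
have parent_edge i : i < 7 -> e (v i) (v (p i)).
  by move=> lt_i7; have [|_ ->] // := parent_p i; rewrite size_s.
have ball1_spread a i : tree_ball1 l a i -> v i \in spread e [set v a].
  case/orP => [/eqP<-|/orP[]/andP[lt_7 /eqP<-]]; first by rewrite spread_id ?set11.
    by apply: (@spread_edge _ _ _ (v a)); rewrite ?set11 // nth_mkseq // parent_edge.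
  by apply: (@spread_edge _ _ _ (v (nth 0 l i))); rewrite ?set11 // esym nth_mkseq // parent_edge.
have l_tree : l \in parent_lists 7 0.
  apply: mem_parent_lists; first by rewrite size_mkseq.
  by move=> k lt_k7; rewrite nth_mkseq //; have [] := parent_p k ltac:(lia); lia.
have := parent_lists_burnable3; rewrite allbE => /allP/(_ l l_tree).
case/tree_burnable3P=> a [b [c cover]].
exists [:: v a; v b; v c] => //; rewrite /burned /= spread0 set0U.
apply/subsetP => x; rewrite SE inE => xs; rewrite -(nth_index d xs) -/(v _) in_setU in_set1.
have lt_x8 : index x s < 8 by rewrite -size_s index_mem.
have [[j /ball1_spread aj /ball1_spread ji]|/ball1_spread bi|->] := cover _ lt_x8.
- by rewrite (spread1S _ ji) // in_setU (spread1S _ aj) // set11.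
- by rewrite (spread1S _ bi) // in_setU set11 orbT.
- by rewrite eqxx orbT.
Qed.

Lemma conn_set_coverable3 S k : conn_set S -> 3 <= k -> #|S| + 1 <= 3 * k -> coverable S k.
Proof.
elim: k S => // k IHk S connS; rewrite leq_eqVlt => /orP[/eqP k3|lt3k] leSk.
  rewrite -k3 in leSk *; have [S8|S8] := eqVneq #|S| 8; first exact: conn_set_coverable8.
  by apply: conn_set_coverable => //; lia.
have [S' [z [connS' cardS' coverS]]] := conn_set_shrink connS.
by apply: coverable_rcons (IHk _ connS' _ _) coverS; lia.
Qed.

End ConnectedSets.

Section ConnectedGraphs.
Variables (T : finType) (e : rel T).
Hypotheses (esym : symmetric e) (econn : gconnected e).

Lemma gconnected_closed (S : {set T}) x :
  x \in S -> (forall u v, e u v -> u \in S -> v \in S) -> S = [set: T].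
Proof.
move=> xS clS; apply/setP => y; rewrite inE.
have closedS : closed e S := intro_closed (sym_connect_sym esym) clS.
by rewrite -(closed_connect closedS (econn x y)).
Qed.

Lemma conn_set_setT S : conn_set e S -> conn_set e [set: T].
Proof.
move cardSm : #|~: S| => m; elim: m S cardSm => [|m IHm] S cardSm connS.
  by move/eqP: cardSm; rewrite cards_eq0 -subset0 subCset setC0 subTset => /eqP <-.
have /card_gt0P[w] : 0 < #|~: S| by rewrite cardSm.
rewrite inE => wS; case/card_gt0P: (conn_set_card_gt0 connS) => x xS.
have [/existsP[u /existsP[v /and3P[uS vS euv]]]|noedge] :=
  boolP [exists u, exists v, [&& u \in S, v \notin S & e u v]]; last first.
  suff ST : S = [set: T] by rewrite ST inE in wS.
  apply: gconnected_closed xS _ => u v euv uS; apply: contraNT noedge => vS.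
  by apply/existsP; exists u; apply/existsP; exists v; rewrite uS vS.
apply: (IHm (v |: S)); last by apply: conn_setU1 => //; exists u; rewrite // esym.
have := cardsD1 v (~: S); rewrite inE vS cardSm setCU setDE setIC; lia.
Qed.

Lemma coverable_burning_number k : coverable e [set: T] k -> burning_number e <= k.
Proof. by case=> s <-; apply: burning_number_le. Qed.

Lemma burning_number_connected_le : 3 * burning_number e <= #|T| + 4.
Proof.
have [T0|/card_gt0P[x _]] := posnP #|T|; first by have := burning_number_le_card e; lia.
suff : burning_number e <= (#|T| + 4) %/ 3 by lia.
apply/coverable_burning_number/conn_set_coverable => //.
  exact: conn_set_setT (conn_set1 e x).
by rewrite cardsT; lia.
Qed.

Lemma burning_number_connected_le6 : 6 <= #|T| -> 3 * burning_number e <= #|T| + 3.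
Proof.
move=> le6T; case/card_gt0P: (leq_trans (isT : 0 < 6) le6T) => x _.
suff : burning_number e <= (#|T| + 3) %/ 3 by lia.
apply/coverable_burning_number/conn_set_coverable3 => //; last by rewrite cardsT; lia.
  exact: conn_set_setT (conn_set1 e x).
lia.
Qed.

End ConnectedGraphs.

Definition nbhd (T : finType) (e : rel T) x := [set y | e x y].
Definition degree (T : finType) (e : rel T) x := #|nbhd e x|.
Definition far (T : finType) (e : rel T) u v :=
  [&& u != v, ~~ e u v & [forall w, ~~ (e u w && e w v)]].

Section LocalBounds.
Variables (T : finType) (e : rel T).
Hypothesis esym : symmetric e.

Lemma burning_number_compl_le2 x : degree e x <= 1 -> burning_number (compl e) <= 2.
Proof.
move=> le1x; have [y Nxy] := card_le1_sub1 x le1x.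
apply: (@burning_number_le2 _ _ x y); apply/subsetP => w _.
rewrite in_setU in_set1 in_spread1 /compl.
have [//|wx] := eqVneq w x; have [|wy] := eqVneq w y; rewrite ?orbT //= orbF.
by move: wy; apply: contraNN => exw; rewrite -in_set1 (subsetP Nxy) ?inE.
Qed.

Lemma burning_number_le3_of_near u : (forall w, ~~ far e u w) -> burning_number e <= 3.
Proof.
move=> near; apply: (burning_number_le3 (u := u)); apply/subsetP => w _.
have [->|uw] := eqVneq w u; first by rewrite !spread_id ?set11.
have [euw|neuw] := boolP (e u w); first by rewrite spread_id // in_spread1 euw orbT.
move: (near w); rewrite /far eq_sym uw neuw /= negb_forall => /existsP[m].
rewrite negbK => /andP[eum emw]; apply: (@spread_edge _ _ _ m) => //.
by rewrite in_spread1 eum orbT.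
Qed.

Lemma burning_number_compl_le3 u v : far e u v -> burning_number (compl e) <= 3.
Proof.
move=> /and3P[uv nuv /forallP nomid]; apply: (burning_number_le3 (u := u)).
apply/subsetP => w _.
have vNu : v \in spread (compl e) [set u] by rewrite in_spread1 /compl eq_sym uv nuv orbT.
have [->|wv] := eqVneq w v; first exact: spread_id.
have [euw|neuw] := boolP (e u w); last first.
  by rewrite spread_id // in_spread1 /compl eq_sym neuw andbT orbN.
apply: (spread_edge vNu); rewrite /compl eq_sym wv /=.
by move: (nomid w); apply: contraNN => evw; rewrite euw esym.
Qed.

Hypothesis eirr : irreflexive e.

Lemma degree_compl x : degree e x + degree (compl e) x = #|T|.-1.
Proof.
rewrite /degree; have -> : nbhd (compl e) x = ~: nbhd e x :\ x.
  by apply/setP => y; rewrite !inE /compl eq_sym.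
have := cardsD1 x (~: nbhd e x); have := cardsC (nbhd e x).
rewrite !inE eirr /=; lia.
Qed.

Lemma far_degree u v : far e u v -> degree e u + degree e v + 2 <= #|T|.
Proof.
move=> /and3P[uv nuv /forallP nomid].
have disj : (u |: nbhd e u) :&: (v |: nbhd e v) = set0.
  apply/setP => z; rewrite !inE; apply/negbTE/negP.
  case/andP=> /predU1P[->|euz] /predU1P[zv|evz].
  - by rewrite zv eqxx in uv.
  - by rewrite esym evz in nuv.
  - by rewrite -zv euz in nuv.
  - by move: (nomid z); rewrite euz esym evz.
have := subset_leq_card (subsetT ((u |: nbhd e u) :|: (v |: nbhd e v))).
rewrite cardsT cardsU disj cards0 subn0 !cardsU1 !inE !eirr /degree; lia.
Qed.

End LocalBounds.

Definition c5_dbl (i : 'I_5) : 'I_5 := Ordinal (ltn_pmod i.*2 (isT : 0 < 5)).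

Definition c5_half (i : 'I_5) : 'I_5 := Ordinal (ltn_pmod (i * 3) (isT : 0 < 5)).

Lemma c5_dblK : cancel c5_dbl c5_half.
Proof. by case=> [[|[|[|[|[|?]]]]] ?] //; apply: val_inj. Qed.

Lemma c5_halfK : cancel c5_half c5_dbl.
Proof. by case=> [[|[|[|[|[|?]]]]] ?] //; apply: val_inj. Qed.

Lemma c5_compl a b : (a != b) && ~~ c5 a b = c5 (c5_dbl a) (c5_dbl b).
Proof. by case: a b => [[|[|[|[|[|?]]]]] ?] [[|[|[|[|[|?]]]]] ?]. Qed.

Lemma c5E i j : c5 i j = (j == ordS i) || (j == ord_pred i).
Proof. by case: i j => [[|[|[|[|[|?]]]]] ?] [[|[|[|[|[|?]]]]] ?]. Qed.

Lemma ordS_neq_pred5 (i : 'I_5) : ordS i != ord_pred i.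
Proof. by case: i => [[|[|[|[|[|?]]]]] ?]. Qed.

Lemma c5_radius2 j : exists2 m : 'I_5, (m == ord0) || c5 ord0 m & (j == m) || c5 m j.
Proof.
by exists (if j < 3 then ordS ord0 else ord_pred ord0); case: j => [[|[|[|[|[|?]]]]] ?].
Qed.

Lemma c5_undominated a b : exists c : 'I_5, [&& c != a, ~~ c5 a c & c != b].
Proof.
exists (if b == ordS (ordS a) then ord_pred (ord_pred a) else ordS (ordS a)).
by case: a b => [[|[|[|[|[|?]]]]] ?] [[|[|[|[|[|?]]]]] ?].
Qed.

Section IsoC5.
Variables (T : finType) (e : rel T).

Lemma iso_C5_compl : iso_C5 e -> iso_C5 (compl e).
Proof.
case=> f [f_bij ef]; exists (c5_dbl \o f); split.
  by apply: (bij_comp _ f_bij); exists c5_half; [exact: c5_dblK | exact: c5_halfK].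
by move=> x y; rewrite /compl ef /= -c5_compl (bij_eq f_bij).
Qed.

Lemma iso_C5_burning_number : iso_C5 e -> burning_number e = 3.
Proof.
case=> f [[g fK gK] ef].
have card5 : #|T| = 5 by rewrite (bij_eq_card (Bijective fK gK)) card_ord.
have Nf x w : (w \in spread e [set x]) = (f w == f x) || c5 (f x) (f w).
  by rewrite in_spread1 ef (can_eq fK).
apply/eqP; rewrite eqn_leq; apply/andP; split.
  apply: (burning_number_le3 (u := g ord0)); apply/subsetP => w _.
  have [m m0 mw] := c5_radius2 (f w).
  by apply: (spread1S (x := g m)); rewrite Nf !gK.
apply: burning_number_ge3; first by rewrite card5.
move=> x y; have [c /and3P[cx ncx cy]] := c5_undominated (f x) (f y).
apply/subsetPn; exists (g c) => //.
by rewrite in_setU in_set1 Nf gK 2!negb_or cx ncx (can2_eq gK fK) cy.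
Qed.

Hypothesis esym : symmetric e.

Lemma nbhd2E v a b : degree e v <= 2 -> e v a -> e v b -> a != b -> nbhd e v = [set a; b].
Proof.
move=> le2v eva evb ab; apply/eqP; rewrite eq_sym eqEcard cards2 ab le2v andbT.
by rewrite subUset !sub1set !inE eva evb.
Qed.

Lemma iso_C5_of_cycle (x : 'I_5 -> T) : bijective x -> (forall v, degree e v <= 2) ->
  (forall i, e (x i) (x (ordS i))) -> iso_C5 e.
Proof.
case=> g xK gK le2 cyc; exists g; split; first by exists x.
suff exE i j : e (x i) (x j) = c5 i j by move=> u v; rewrite -[u]gK -[v]gK exE !xK.
have epred : e (x i) (x (ord_pred i)) by rewrite esym -{2}[i]ord_predK cyc.
rewrite c5E -!(inj_eq (can_inj xK)) -in_set2 -(nbhd2E (le2 _) (cyc i) epred) ?inE //.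
by rewrite (inj_eq (can_inj xK)) ordS_neq_pred5.
Qed.

Hypotheses (eirr : irreflexive e) (econn : gconnected e) (card5 : #|T| = 5).
Hypothesis deg2 : forall v, degree e v = 2.

Lemma nbhd2P v y : e v y -> exists2 z, z != y & nbhd e v = [set y; z].
Proof.
move=> evy; have /cards2P[a [b [ab Nv]]] : #|nbhd e v| == 2 by rewrite -/(degree e v) deg2.
have : y \in nbhd e v by rewrite inE.
rewrite Nv !inE => /orP[]/eqP->; first by exists b; rewrite // eq_sym.
by exists a => //; rewrite setUC.
Qed.

Lemma no_small_closed_set (S : {set T}) x :
  x \in S -> #|S| < 5 -> {in S, forall v, nbhd e v \subset S} -> False.
Proof.
move=> xS ltS5 clS; have ST : S = [set: T].
  apply: (gconnected_closed esym econn xS) => u v euv uS.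
  by apply: (subsetP (clS u uS)); rewrite inE.
by move: ltS5; rewrite ST cardsT card5.
Qed.

Lemma neq_of_edge u w : e u w -> u != w.
Proof. by apply: contraTneq => ->; rewrite eirr. Qed.

Lemma no_triangle a b c : e a b -> e b c -> e c a -> False.
Proof.
move=> eab ebc eca; have [eba ecb eac] : [/\ e b a, e c b & e a c] by split; rewrite esym.
apply: (@no_small_closed_set [set v in [:: a; b; c]] a); rewrite ?inE ?eqxx //.
  by rewrite cardsE (leq_ltn_trans (card_size _)).
move=> v; rewrite !inE => /or3P[]/eqP->; rewrite ?(nbhd2E (eq_leq (deg2 _)) eab eac)
    ?(nbhd2E (eq_leq (deg2 _)) ebc eba) ?(nbhd2E (eq_leq (deg2 _)) eca ecb) ?neq_of_edge //;
  by rewrite subUset !sub1set !inE !eqxx ?orbT.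
Qed.

Lemma no_square a b c d : e a b -> e b c -> e c d -> e d a -> a != c -> b != d -> False.
Proof.
move=> eab ebc ecd eda ac bd; have [ca db] : c != a /\ d != b by rewrite eq_sym ac eq_sym bd.
have [eba ecb edc ead] : [/\ e b a, e c b, e d c & e a d] by split; rewrite esym.
apply: (@no_small_closed_set [set v in [:: a; b; c; d]] a); rewrite ?inE ?eqxx //.
  by rewrite cardsE (leq_ltn_trans (card_size _)).
move=> v; rewrite !inE => /or4P[]/eqP->; rewrite ?(nbhd2E (eq_leq (deg2 _)) eab ead)
    ?(nbhd2E (eq_leq (deg2 _)) ebc eba) ?(nbhd2E (eq_leq (deg2 _)) ecd ecb)
    ?(nbhd2E (eq_leq (deg2 _)) eda edc) //;
  by rewrite subUset !sub1set !inE !eqxx ?orbT.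
Qed.

Lemma iso_C5_of_2_regular : iso_C5 e.
Proof.
have /card_gt0P[x0 _] : 0 < #|T| by rewrite card5.
have /cards2P[x1 [x4 [x14 N0]]] : #|nbhd e x0| == 2 by rewrite -/(degree e x0) deg2.
have e01 : e x0 x1 by move: (set21 x1 x4); rewrite -N0 inE.
have e04 : e x0 x4 by move: (set22 x1 x4); rewrite -N0 inE.
have [e10 e40] : e x1 x0 /\ e x4 x0 by split; rewrite esym.
have [x2 x20 N1] := nbhd2P e10; have [x3 x30 N4] := nbhd2P e40.
have e12 : e x1 x2 by move: (set22 x0 x2); rewrite -N1 inE.
have e43 : e x4 x3 by move: (set22 x0 x3); rewrite -N4 inE.
have [e21 e34] : e x2 x1 /\ e x3 x4 by split; rewrite esym.
have x13 : x1 != x3 by apply/eqP => x13; apply: (no_triangle e04 _ e10); rewrite x13.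
have x24 : x2 != x4 by apply/eqP => x24; apply: (no_triangle e01 _ e40); rewrite -x24.
have x23 : x2 != x3.
  by apply/eqP => x23; apply: (no_square e01 e12 _ e40 _ x14); rewrite ?x23 // eq_sym.
have uniq_x : uniq [:: x0; x1; x2; x3; x4].
  rewrite /= !inE !negb_or !(eq_sym x0) x20 x30 x13 x14 x23 x24.
  by rewrite (neq_of_edge e10) (neq_of_edge e40) (neq_of_edge e12) (neq_of_edge e34).
have mem_x v : v \in [:: x0; x1; x2; x3; x4].
  suff /setP/(_ v) : [set v in [:: x0; x1; x2; x3; x4]] = [set: T] by rewrite !inE.
  by apply/eqP; rewrite eqEcard subsetT cardsT card5 cardsE (card_uniqP uniq_x).
have e23 : e x2 x3.
  have [z zx1 N2] := nbhd2P e21; have e2z : e x2 z by move: (set22 x1 z); rewrite -N2 inE.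
  move: (mem_x z); rewrite !inE (negbTE zx1) /= => /or4P[]/eqP zE; rewrite zE in e2z => //.
  - by case: (no_triangle e01 e12 e2z).
  - by rewrite eirr in e2z.
  - by case: (no_square e01 e12 e2z e40 _ x14); rewrite eq_sym.
apply: (@iso_C5_of_cycle (fun i => nth x0 [:: x0; x1; x2; x3; x4] i)).
- apply: inj_card_bij => [i j /eqP|]; last by rewrite card5 card_ord.
  by rewrite nth_uniq // => /eqP/val_inj.
- by move=> v; rewrite deg2.
- by case=> [[|[|[|[|[|?]]]]] ?].
Qed.

End IsoC5.

Lemma burning_number_mul_iso_C5 (T : finType) (e : rel T) :
  iso_C5 e -> burning_number e * burning_number (compl e) = #|T| + 4.
Proof.
move=> isoC5; have [f [f_bij _]] := isoC5.
by rewrite (bij_eq_card f_bij) card_ord !iso_C5_burning_number //; apply: iso_C5_compl.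
Qed.

Section ProductBound.
Variables (T : finType) (e : rel T).
Hypotheses (esym : symmetric e) (eirr : irreflexive e) (econn : gconnected e).

Lemma burning_number_mul_lt_low_degree x :
  degree e x <= 1 -> burning_number e * burning_number (compl e) < #|T| + 4.
Proof.
move=> le1x; have le2c := burning_number_compl_le2 le1x.
have := burning_number_connected_le esym econn.
have := leq_mul (leqnn (burning_number e)) le2c; lia.
Qed.

Lemma burning_number_mul_lt_far u v : far e u v -> 1 < degree e u -> 1 < degree e v ->
  burning_number e * burning_number (compl e) < #|T| + 4.
Proof.
move=> fuv deg_u deg_v; have le3c := burning_number_compl_le3 esym fuv.
have := far_degree esym eirr fuv; have := burning_number_connected_le6 esym econn.
have := leq_mul (leqnn (burning_number e)) le3c; lia.
Qed.

End ProductBound.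

Lemma burning_number_mul_lt_or_iso_C5 (T : finType) (e : rel T) :
  symmetric e -> irreflexive e -> gconnected e -> gconnected (compl e) ->
  burning_number e * burning_number (compl e) < #|T| + 4 \/ iso_C5 e.
Proof.
move=> esym eirr econn cconn; have csym := compl_sym esym; have cirr := @compl_irr T e.
have bnCC : burning_number (compl (compl e)) = burning_number e.
  exact: eq_burning_number (complK eirr).
have [T0|/card_gt0P[x0 _]] := posnP #|T|.
  by left; have := burning_number_le_card e; rewrite T0 leqn0 => /eqP ->.
have [/existsP[x le1x]|/existsPn deg_e] := boolP [exists x, degree e x <= 1].
  left; exact: (burning_number_mul_lt_low_degree esym econn le1x).
have [/existsP[x le1x]|/existsPn deg_c] := boolP [exists x, degree (compl e) x <= 1].
  left; rewrite mulnC -bnCC; exact: (burning_number_mul_lt_low_degree csym cconn le1x).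
have deg2e x : 1 < degree e x by rewrite ltnNge deg_e.
have deg2c x : 1 < degree (compl e) x by rewrite ltnNge deg_c.
have [/existsP[u /existsP[v fuv]]|/existsPn near_e] := boolP [exists u, exists v, far e u v].
  left; exact: (burning_number_mul_lt_far esym eirr econn fuv (deg2e u) (deg2e v)).
have [/existsP[u /existsP[v fuv]]|/existsPn near_c] :=
  boolP [exists u, exists v, far (compl e) u v].
  left; rewrite mulnC -bnCC.
  exact: (burning_number_mul_lt_far csym cirr cconn fuv (deg2c u) (deg2c v)).
have le3e := burning_number_le3_of_near (elimT existsPn (near_e x0)).
have le3c := burning_number_le3_of_near (elimT existsPn (near_c x0)).
have degE v : degree e v + degree (compl e) v = #|T|.-1 := degree_compl eirr v.
have gt4T : 4 < #|T| by have := degE x0; have := deg2e x0; have := deg2c x0; lia.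
have [gt5T|le5T] := ltnP 5 #|T|; first by left; have := leq_mul le3e le3c; lia.
have card5 : #|T| = 5 by lia.
right; apply: iso_C5_of_2_regular esym eirr econn card5 _ => v.
by have := degE v; have := deg2e v; have := deg2c v; lia.
Qed.

Theorem theorem2 (T : finType) (e : rel T) :
  symmetric e -> irreflexive e ->
  gconnected e -> gconnected (compl e) ->
  burning_number e * burning_number (compl e) <= #|T| + 4 /\
  (burning_number e * burning_number (compl e) = #|T| + 4 <-> iso_C5 e).
Proof.
move=> esym eirr econn cconn.
have [lt_bn|isoC5] := burning_number_mul_lt_or_iso_C5 esym eirr econn cconn.
  split; first exact: ltnW.
  by split=> [eq_bn|/burning_number_mul_iso_C5 eq_bn]; rewrite eq_bn ltnn in lt_bn.
by rewrite burning_number_mul_iso_C5.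
Qed.
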